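(* Let $G$ and $H$ be connected graphs such that $G_{SR}$ and $H_{SR}$ are regular and at least one of them is bipartite. Then $$dim_s(G\square H)=\frac{|\partial(G)|\,|\partial(H)|}{2}.$$
   Context: Graphs are finite, simple, undirected; for connected $G$, $d_G$ is the shortest-path distance and $I_G[u,v]$ is the set of vertices lying on some shortest $u$–$v$ path. A vertex $w$ strongly resolves vertices $u,v$ if $v\in I_G[u,w]$ or $u\in I_G[v,w]$. A strong resolving set of $G$ is a set $S\subseteq V(G)$ such that every pair of vertices is strongly resolved by some vertex of $S$; $dim_s(G)$ is the minimum cardinality of such a set. A vertex $u$ is maximally distant from $v$ if $d_G(v,w)\le d_G(u,v)$ for every neighbor $w$ of $u$; distinct $u,v$ are mutually maximally distant if each is maximally distant from the other. The boundary $\partial(G)$ is the set of vertices mutually maximally distant with some vertex. The strong resolving graph $G_{SR}$ has vertex set $\partial(G)$, two vertices adjacent iff they are mutually maximally distant in $G$. $G\square H$ denotes the Cartesian product: vertex set $V(G)\times V(H)$, $(a,b)\sim(c,d)$ iff ($a=c$ and $bd\in E(H)$) or ($b=d$ and $ac\in E(G)$). *)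

From mathcomp Require Import all_boot.
Set Implicit Arguments. Unset Strict Implicit. Unset Printing Implicit Defensive.

Section Graphs.
Variable T : finType.
Variable e : rel T.

Definition simple_graph := symmetric e /\ irreflexive e.
Definition connected_graph := forall u v : T, connect e u v.

Definition walkb (u v : T) (n : nat) : bool :=
  [exists p : n.-tuple T, path e u p && (last u p == v)].

(* In a connected
   graph such a walk of length < #|T| always exists; the default value
   #|T| is only used for disconnected pairs, which never occur below. *)
Definition dist (u v : T) : nat :=
  \big[minn/#|T|]_(n < #|T| | walkb u v n) n.

Definition interval (u v : T) : {set T} :=
  [set w | dist u w + dist w v == dist u v].

Definition strongly_resolves (w u v : T) : bool :=
  (v \in interval u w) || (u \in interval v w).

Definition strong_resolving_setb (S : {set T}) : bool :=
  [forall u, forall v, [exists w in S, strongly_resolves w u v]].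

(* strong metric dimension: minimum cardinality of a strong resolving set
   (setT is always one, so the minimum is over a nonempty family) *)
Definition sdim : nat :=
  \big[minn/#|T|]_(S : {set T} | strong_resolving_setb S) #|S|.

Definition max_distant (u v : T) : bool :=
  [forall w, e u w ==> (dist v w <= dist u v)].

Definition mutually_max_distant (u v : T) : bool :=
  [&& u != v, max_distant u v & max_distant v u].

(* boundary of G = vertex set of G_SR *)
Definition boundary : {set T} :=
  [set u | [exists v, mutually_max_distant u v]].

(* G_SR is regular: all vertices of G_SR have the same degree in G_SR
   (neighbours in G_SR are the mutually maximally distant vertices) *)
Definition SR_regular : Prop :=
  exists k : nat, forall u, u \in boundary ->
    #|[set v | mutually_max_distant u v]| = k.

Definition SR_bipartite : Prop :=
  exists A : {set T}, forall u v, mutually_max_distant u v ->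
    (u \in A) != (v \in A).

End Graphs.

Definition cart_prod (T1 T2 : finType) (e1 : rel T1) (e2 : rel T2)
  : rel (T1 * T2)%type :=
  fun x y => ((x.1 == y.1) && e2 x.2 y.2) || ((x.2 == y.2) && e1 x.1 y.1).

From mathcomp Require Import all_boot all_order zify.
From Stdlib Require Import Lia.
Import Order.TTheory.
Set Implicit Arguments. Unset Strict Implicit. Unset Printing Implicit Defensive.

(* The strong resolving sets of a connected graph G are exactly the vertex
   covers of G_SR (a geodesic can always be extended to a mutually maximally
   distant pair, and such a pair is only strongly resolved by its own ends), so
   dim_s(G) is the vertex cover number of G_SR.  For a k-regular G_SR with
   k > 0, double counting shows that a cover has at least half of the vertices,
   while a bipartite G_SR is covered by the smaller colour class.  Distances
   add up in G □ H, hence (G □ H)_SR is the direct product G_SR × H_SR: it lives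
   on ∂(G) × ∂(H), is regular of degree k l, and is bipartite as soon as one
   factor is. *)

Section Walks.
Variables (T : finType) (e : rel T).

Lemma walkP u v n :
  reflect (exists p : seq T, [/\ size p = n, path e u p & last u p = v])
          (walkb e u v n).
Proof.
apply: (iffP existsP) => [[t /andP[pt /eqP lt]]|[p [sp pp lp]]].
  by exists (val t); rewrite size_tuple.
have sp' : size p == n by apply/eqP.
by exists (Tuple sp'); rewrite /= pp lp eqxx.
Qed.

Lemma walk0 u v : walkb e u v 0 = (u == v).
Proof. by apply/walkP/eqP => [[[|x p] [//= _ _ ->]]|->]; exists [::]. Qed.

Lemma walkS u v n :
  walkb e u v n.+1 = [exists w, e u w && walkb e w v n].
Proof.
apply/walkP/existsP.
  move=> [[|x p] [//= [sp] /andP[ux pp] lp]].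
  by exists x; rewrite ux; apply/walkP; exists p.
move=> [x /andP[ux /walkP[p [sp pp lp]]]].
by exists (x :: p); rewrite /= sp ux pp lp.
Qed.

Lemma walk_edge u v : e u v -> walkb e u v 1.
Proof.
by move=> uv; rewrite walkS; apply/existsP; exists v; rewrite uv walk0 eqxx.
Qed.

Lemma walk_cat u v w m n :
  walkb e u v m -> walkb e v w n -> walkb e u w (m + n).
Proof.
elim: m u => [|m IH] u; first by rewrite walk0 => /eqP->.
rewrite walkS => /existsP[x /andP[ux xv]] vw.
by rewrite addSn walkS; apply/existsP; exists x; rewrite ux (IH _ xv vw).
Qed.

Lemma walk_connect u v n : walkb e u v n -> connect e u v.
Proof. by move/walkP=> [p [_ pp lp]]; apply/connectP; exists p. Qed.

Lemma connect_walk u v : connect e u v -> exists n, walkb e u v n.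
Proof. by move/connectP=> [p pp lp]; exists (size p); apply/walkP; exists p. Qed.

Lemma walk_shorten u v m :
  walkb e u v m -> exists n : 'I_#|T|, (n <= m) && walkb e u v n.
Proof.
move/walkP=> [p [sp pp <-]]; have [q pq uq sub_qp] := shortenP pp.
have ltqT : size q < #|T|.
  by rewrite -ltnS -/(size (u :: q)) -(card_uniqP uq) ltnS max_card.
exists (Ordinal ltqT); apply/andP; split; last by apply/walkP; exists q.
by rewrite /= -sp uniq_leq_size //; case/andP: uq.
Qed.

Lemma dist_le u v m : walkb e u v m -> dist e u v <= m.
Proof.
move/walk_shorten=> [n /andP[nm uvn]]; apply: leq_trans nm.
exact: (@bigmin_le_cond _ nat _ #|T| n (walkb e u v) val).
Qed.

Lemma dist_walk u v m : walkb e u v m -> walkb e u v (dist e u v).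
Proof.
move/walk_shorten=> [n /andP[_ uvn]]; rewrite /dist -minEnat.
have [i uvi ->] := @eq_bigmin _ nat _ #|T| n (walkb e u v) val uvn
  (fun i _ => ltnW (ltn_ord i)).
exact: uvi.
Qed.

End Walks.

Section VertexCover.
Variables (T : finType) (r : rel T).
Hypothesis rsym : symmetric r.

Definition vertex_cover (S : {set T}) :=
  forall x y, r x y -> (x \in S) || (y \in S).

Definition nonisolated : {set T} := [set x | [exists y, r x y]].

Lemma nonisolatedP x y : r x y -> (x \in nonisolated) && (y \in nonisolated).
Proof.
by move=> xy; rewrite !inE; apply/andP; split; apply/existsP;
  [exists y | exists x; rewrite rsym].
Qed.

Lemma card_neighbours x : #|[set y | r x y]| = \sum_y (r x y : nat).
Proof.
rewrite -sum1_card big_mkcond; apply: eq_bigr => y _.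
by rewrite inE; case: (r x y).
Qed.

Lemma regular_cover_lower k S :
  (forall x, x \in nonisolated -> #|[set y | r x y]| = k) ->
  vertex_cover S -> #|nonisolated| <= 2 * #|S|.
Proof.
move=> reg cov.
have [k0 | k_gt0] := posnP k.
  rewrite (_ : nonisolated = set0) ?cards0 //; apply/setP=> x; rewrite in_set0.
  apply/negP=> xN; have := xN; rewrite inE => /existsP[y xy].
  have /eqP := reg x xN; rewrite k0 cards_eq0 => /eqP/setP/(_ y).
  by rewrite !inE xy.
have sum_in (A : {set T}) F : \sum_(x in A) F x = \sum_x (x \in A) * F x.
  by rewrite big_mkcond; apply: eq_bigr => x _; case: (x \in A); rewrite ?mul1n.
pose deg x := \sum_y (r x y : nat).
have degE x : deg x = (x \in nonisolated) * k.
  rewrite /deg -card_neighbours.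
  case: (boolP (x \in nonisolated)) => [/reg -> | xN]; first by rewrite mul1n.
  rewrite mul0n; apply/eqP; rewrite cards_eq0; apply/eqP/setP=> y; rewrite !inE.
  by apply/negP=> xy; rewrite inE in xN; case/existsP: xN; exists y.
have from_src : \sum_x \sum_y (x \in S) * r x y = \sum_(x in S) deg x.
  by rewrite sum_in; apply: eq_bigr => x _; rewrite big_distrr.
have from_dst : \sum_x \sum_y (y \in S) * r x y = \sum_(x in S) deg x.
  rewrite exchange_big sum_in; apply: eq_bigr => y _; rewrite big_distrr.
  by apply: eq_bigr => x _; rewrite rsym.
have edges_le : \sum_x deg x <= 2 * \sum_(x in S) deg x.
  rewrite mul2n -addnn -{1}from_src -from_dst -big_split /=.
  apply: leq_sum => x _; rewrite -big_split /=; apply: leq_sum => y _.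
  have := cov x y; case: (r x y) => // /(_ isT).
  by case: (x \in S); case: (y \in S).
have edgesE : \sum_x deg x = #|nonisolated| * k.
  by rewrite -sum_nat_const sum_in; apply: eq_bigr => x _; rewrite degE.
have src_le : \sum_(x in S) deg x <= #|S| * k.
  rewrite -sum_nat_const; apply: leq_sum => x _; rewrite degE.
  by case: (x \in nonisolated); rewrite ?mul1n ?mul0n.
rewrite -(leq_pmul2r k_gt0) -mulnA -edgesE (leq_trans edges_le) //.
by rewrite leq_mul2l src_le orbT.
Qed.

Lemma bipartite_cover (A : {set T}) :
  (forall x y, r x y -> (x \in A) != (y \in A)) ->
  exists2 S, vertex_cover S & 2 * #|S| <= #|nonisolated|.
Proof.
have side_cover (B : {set T}) :
    (forall x y, r x y -> (x \in B) != (y \in B)) ->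
    vertex_cover (nonisolated :&: B).
  move=> bip x y xy; have := bip x y xy; case/andP: (nonisolatedP xy) => xN yN.
  by rewrite !in_setI xN yN; case: (x \in B); case: (y \in B).
move=> bipA; have bipCA x y : r x y -> (x \in ~: A) != (y \in ~: A).
  by rewrite !in_setC => /bipA; case: (x \in A); case: (y \in A).
have := cardsID A nonisolated; rewrite setDE.
have [le_in_out | lt_out_in] := leqP #|nonisolated :&: A| #|nonisolated :&: ~: A|.
  by exists (nonisolated :&: A); [apply: side_cover | lia].
by exists (nonisolated :&: ~: A); [apply: side_cover | lia].
Qed.

End VertexCover.

Section ConnectedGraph.
Variables (T : finType) (e : rel T).
Hypotheses (esym : symmetric e) (conn : connected_graph e).
Local Notation d := (dist e).

Lemma walk_rev u v n : walkb e u v n -> walkb e v u n.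
Proof.
elim: n u => [|n IH] u; first by rewrite !walk0 eq_sym.
rewrite walkS => /existsP[x /andP[ux xv]].
by rewrite -addn1; apply: walk_cat (IH _ xv) _; apply: walk_edge; rewrite esym.
Qed.

Lemma walk_dist u v : walkb e u v (d u v).
Proof. by have [n] := connect_walk (conn u v); apply: dist_walk. Qed.

Lemma dist0 u : d u u = 0.
Proof. by apply/eqP; rewrite -leqn0; apply: dist_le; rewrite walk0. Qed.

Lemma dist_eq0 u v : d u v = 0 -> u = v.
Proof. by move=> duv; have := walk_dist u v; rewrite duv walk0 => /eqP. Qed.

Lemma distC u v : d u v = d v u.
Proof. by apply/eqP; rewrite eqn_leq !dist_le // walk_rev // walk_dist. Qed.

Lemma dist_triangle u v w : d u w <= d u v + d v w.
Proof. by apply: dist_le; apply: walk_cat; apply: walk_dist. Qed.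

Lemma dist_edge u w v : e u w -> d u v <= (d w v).+1.
Proof.
by move=> uw; rewrite -add1n; apply: dist_le; apply: walk_cat (walk_dist _ _);
  apply: walk_edge.
Qed.

Lemma dist_step u v : u != v -> exists2 w, e u w & (d w v).+1 = d u v.
Proof.
move=> uv; have := walk_dist u v.
case duv: (d u v) => [|n]; first by rewrite (dist_eq0 duv) eqxx in uv.
rewrite walkS => /existsP[w /andP[uw wv]]; exists w => //.
by apply/eqP; rewrite eqn_leq -duv dist_edge // andbT duv ltnS dist_le.
Qed.

Lemma max_distantP w v :
  reflect (forall w', e w w' -> d v w' <= d w v) (max_distant e w v).
Proof.
apply: (iffP forallP) => [h w' ww'|h w']; first exact: implyP (h w') ww'.
by apply/implyP; apply: h.
Qed.

(* The farthest vertex from v among those beyond u on a geodesic from v. *)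
Lemma geodesic_max_distant u v :
  exists2 w, d v u + d u w = d v w & max_distant e w v.
Proof.
pose beyond w := d v u + d u w == d v w.
have beyond_u : beyond u by rewrite /beyond dist0 addn0.
have [w /eqP vuw far] := arg_maxnP (d v) beyond_u.
exists w => //; apply/max_distantP => w' ww'; rewrite leqNgt; apply/negP=> lt.
have dvw' : d v w' <= (d v w).+1 by rewrite distC (distC v) dist_edge // esym.
have duw' : d u w' <= (d u w).+1 by rewrite distC (distC u) dist_edge // esym.
have := dist_triangle v u w'; rewrite distC in lt => vuw'.
have /far : beyond w' by rewrite /beyond; apply/eqP; lia.
lia.
Qed.

Lemma geodesic_mutually_max_distant u v : u != v ->
  exists w z, [/\ mutually_max_distant e w z, d v u + d u w = d v w &
                  d w v + d v z = d w z].
Proof.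
move=> uv; have [w vuw /max_distantP wv] := geodesic_max_distant u v.
have [z wvz zw] := geodesic_max_distant v w.
exists w, z; split=> //; rewrite /mutually_max_distant zw andbT.
apply/andP; split.
  apply/eqP=> wz; move: wvz; rewrite -wz dist0 (distC w v).
  have : d v u != 0 by apply/eqP=> /dist_eq0 vu; rewrite vu eqxx in uv.
  lia.
apply/max_distantP=> w' ww'; have := wv w' ww'.
have := dist_triangle z v w'; have := distC z v; lia.
Qed.

Lemma exists_mutually_max_distant :
  1 < #|T| -> exists u v, mutually_max_distant e u v.
Proof.
move=> /card_gt1P[x [y [_ _ xy]]].
by have [w [z [wz _ _]]] := geodesic_mutually_max_distant xy; exists w, z.
Qed.

Lemma max_distant_interval x y w :
  y \in interval e x w -> max_distant e y x -> w = y.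
Proof.
rewrite inE => /eqP xyw /max_distantP yx; apply/eqP; rewrite eq_sym.
apply/negPn/negP=> yw; have [y' yy' dy'w] := dist_step yw.
have := yx y' yy'; have := dist_triangle x y' w; rewrite (distC y x); lia.
Qed.

Lemma mutually_max_distantC : symmetric (mutually_max_distant e).
Proof.
by move=> x y; rewrite /mutually_max_distant eq_sym; congr (_ && _); exact: andbC.
Qed.

Lemma max_distant_self a :
  irreflexive e -> 1 < #|T| -> max_distant e a a = false.
Proof.
move=> eirr /card_gt1P [x [y [_ _ xy]]].
have [b ab] : exists b, a != b.
  by case: (eqVneq a x) => [->|]; [exists y | exists x].
have [c ac _] := dist_step ab.
apply/negP=> /max_distantP /(_ c ac).
by rewrite dist0 leqn0 => /eqP /dist_eq0 ca; rewrite ca eirr in ac.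
Qed.

Lemma strong_resolving_cover S :
  strong_resolving_setb e S -> vertex_cover (mutually_max_distant e) S.
Proof.
move=> /forallP srs x y /and3P[_ xy yx].
have /existsP[w /andP[wS]] := forallP (srs x) y.
by case/orP=> [/max_distant_interval/(_ yx) <- | /max_distant_interval/(_ xy) <-];
  rewrite wS ?orbT.
Qed.

Lemma cover_strong_resolving S : 1 < #|T| ->
  vertex_cover (mutually_max_distant e) S -> strong_resolving_setb e S.
Proof.
move=> /exists_mutually_max_distant[x0 [y0 xy0]] cov.
apply/forallP=> u; apply/forallP=> v; apply/existsP.
have [<- | uv] := eqVneq u v.
  have resolves_uu w : strongly_resolves e w u u.
    by rewrite /strongly_resolves /interval inE dist0 eqxx.
  by case/orP: (cov _ _ xy0) => [x0S | y0S]; [exists x0 | exists y0];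
    rewrite ?x0S ?y0S resolves_uu.
have [w [z [wz vuw wvz]]] := geodesic_mutually_max_distant uv.
case/orP: (cov _ _ wz) => [wS | zS].
  by exists w; rewrite wS /strongly_resolves /interval !inE vuw eqxx orbT.
(* z lies beyond v on the geodesic from w, which passes through u *)
exists z; rewrite zS /strongly_resolves /interval inE; apply/orP; left; apply/eqP.
have := dist_triangle z u w; have := dist_triangle z v u.
rewrite (distC u v) (distC u z) (distC v z) (distC w v) (distC w z) in wvz *.
lia.
Qed.

Theorem sdim_SR_regular_bipartite : 1 < #|T| ->
  SR_regular e -> SR_bipartite e -> 2 * sdim e = #|boundary e|.
Proof.
move=> nontriv [k reg] [A bip].
apply/eqP; rewrite eqn_leq; apply/andP; split.
  have [S cov le_S] := bipartite_cover mutually_max_distantC bip.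
  apply: leq_trans le_S; rewrite leq_mul2l /=.
  exact: (@bigmin_le_cond _ nat _ #|T| S (strong_resolving_setb e) (fun S => #|S|)
           (cover_strong_resolving nontriv cov)).
apply: (big_ind (fun m => #|boundary e| <= 2 * m)).
- by rewrite (leq_trans (max_card _)) // leq_pmull.
- by move=> m n; rewrite /minn; case: ifP.
- move=> S /strong_resolving_cover cov.
  exact: (regular_cover_lower mutually_max_distantC reg cov).
Qed.

End ConnectedGraph.

Section CartesianProduct.
Variables (T1 T2 : finType) (e1 : rel T1) (e2 : rel T2).
Hypotheses (s1 : symmetric e1) (s2 : symmetric e2).
Hypotheses (c1 : connected_graph e1) (c2 : connected_graph e2).
Local Notation P := (cart_prod e1 e2).

Lemma cart_prod_sym : symmetric P.
Proof. by move=> x y; rewrite /cart_prod (eq_sym x.1) (eq_sym x.2) s1 s2. Qed.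

Lemma walk_cart_prodl a c b m : walkb e1 a c m -> walkb P (a, b) (c, b) m.
Proof.
elim: m a => [|m IH] a; first by rewrite !walk0 => /eqP->.
rewrite !walkS => /existsP[x /andP[ax xc]].
by apply/existsP; exists (x, b); rewrite IH // /cart_prod /= ax eqxx orbT.
Qed.

Lemma walk_cart_prodr a b d m : walkb e2 b d m -> walkb P (a, b) (a, d) m.
Proof.
elim: m b => [|m IH] b; first by rewrite !walk0 => /eqP->.
rewrite !walkS => /existsP[x /andP[bx xd]].
by apply/existsP; exists (a, x); rewrite IH // /cart_prod /= bx eqxx.
Qed.

Lemma walk_cart_prod a b c d :
  walkb P (a, b) (c, d) (dist e1 a c + dist e2 b d).
Proof.
exact: walk_cat (walk_cart_prodl _ (walk_dist c1 a c))
                (walk_cart_prodr _ (walk_dist c2 b d)).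
Qed.

Lemma cart_prod_connected : connected_graph P.
Proof. by move=> [a b] [c d]; apply: walk_connect (walk_cart_prod a b c d). Qed.

Lemma walk_cart_prod_ge m x y : walkb P x y m ->
  dist e1 x.1 y.1 + dist e2 x.2 y.2 <= m.
Proof.
elim: m x => [|m IH] x; first by rewrite walk0 => /eqP->; rewrite !dist0.
rewrite walkS => /existsP[x' /andP[xx' /IH le_m]].
case/orP: xx' => /andP[/eqP-> step].
  by have := dist_edge c2 y.2 step; lia.
by have := dist_edge c1 y.1 step; lia.
Qed.

Lemma dist_cart_prod x y : dist P x y = dist e1 x.1 y.1 + dist e2 x.2 y.2.
Proof.
case: x y => [a b] [c d]; have uv := walk_cart_prod a b c d.
by apply/eqP; rewrite eqn_leq (dist_le uv) (walk_cart_prod_ge (dist_walk uv)).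
Qed.

Lemma max_distant_cart_prod x y : max_distant P x y =
  max_distant e1 x.1 y.1 && max_distant e2 x.2 y.2.
Proof.
case: x y => [a b] [c d] /=.
apply/max_distantP/andP => [far | [/max_distantP far1 /max_distantP far2]].
  split; apply/max_distantP.
    move=> a' aa'; have := far (a', b).
    rewrite !dist_cart_prod /cart_prod /= aa' eqxx orbT.
    by move/(_ isT); rewrite (distC s2 c2 d b); lia.
  move=> b' bb'; have := far (a, b').
  rewrite !dist_cart_prod /cart_prod /= bb' eqxx.
  by move/(_ isT); rewrite (distC s1 c1 c a); lia.
move=> [a' b']; rewrite !dist_cart_prod /cart_prod /=.
case/orP=> /andP[/eqP <- step].
  by have := far2 _ step; rewrite (distC s1 c1 c a); lia.
by have := far1 _ step; rewrite (distC s2 c2 d b); lia.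
Qed.

Hypotheses (i1 : irreflexive e1) (i2 : irreflexive e2).
Hypotheses (n1 : 1 < #|T1|) (n2 : 1 < #|T2|).

Lemma mutually_max_distant_cart_prod x y : mutually_max_distant P x y =
  mutually_max_distant e1 x.1 y.1 && mutually_max_distant e2 x.2 y.2.
Proof.
case: x y => [a b] [c d].
rewrite /mutually_max_distant !max_distant_cart_prod /=.
have [<- | ac] := eqVneq a c; first by rewrite max_distant_self // !andbF.
have [<- | bd] := eqVneq b d; first by rewrite max_distant_self // !andbF.
by rewrite xpair_eqE (negbTE ac) (negbTE bd) andbACA.
Qed.

Lemma boundary_cart_prod : boundary P = setX (boundary e1) (boundary e2).
Proof.
apply/setP=> -[a b]; rewrite !inE /=; apply/existsP/andP => [[[c d]]|].
  rewrite mutually_max_distant_cart_prod => /andP[ac bd].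
  by split; apply/existsP; [exists c | exists d].
move=> [/existsP[c ac] /existsP[d bd]].
by exists (c, d); rewrite mutually_max_distant_cart_prod ac bd.
Qed.

Lemma SR_regular_cart_prod : SR_regular e1 -> SR_regular e2 -> SR_regular P.
Proof.
move=> [k reg1] [l reg2]; exists (k * l) => -[a b].
rewrite boundary_cart_prod inE => /andP[/= /reg1 <- /reg2 <-]; rewrite -cardsX.
by apply: eq_card => -[c d]; rewrite !inE mutually_max_distant_cart_prod.
Qed.

Lemma SR_bipartite_cart_prodl : SR_bipartite e1 -> SR_bipartite P.
Proof.
move=> [A bip]; exists [set x | x.1 \in A] => x y.
by rewrite mutually_max_distant_cart_prod !inE => /andP[/bip].
Qed.

Lemma SR_bipartite_cart_prodr : SR_bipartite e2 -> SR_bipartite P.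
Proof.
move=> [A bip]; exists [set x | x.2 \in A] => x y.
by rewrite mutually_max_distant_cart_prod !inE => /andP[_ /bip].
Qed.

End CartesianProduct.

Theorem theorem10 (T1 T2 : finType) (e1 : rel T1) (e2 : rel T2) :
  simple_graph e1 -> simple_graph e2 ->
  1 < #|T1| -> 1 < #|T2| ->
  connected_graph e1 -> connected_graph e2 ->
  SR_regular e1 -> SR_regular e2 ->
  SR_bipartite e1 \/ SR_bipartite e2 ->
  2 * sdim (cart_prod e1 e2) = #|boundary e1| * #|boundary e2|.
Proof.
move=> [s1 i1] [s2 i2] n1 n2 c1 c2 reg1 reg2 bip.
rewrite -cardsX -boundary_cart_prod //.
apply: sdim_SR_regular_bipartite.
- exact: cart_prod_sym.
- exact: cart_prod_connected.
- by rewrite card_prod (leq_trans n1) // leq_pmulr // ltnW.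
- exact: SR_regular_cart_prod.
- by case: bip; [apply: SR_bipartite_cart_prodl | apply: SR_bipartite_cart_prodr].
Qed.
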